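(* Let $K$, $M=\begin{pmatrix}\alpha&\beta\\ \overline{\beta}&\gamma\end{pmatrix}$, $Q$, $\Delta$, $\varepsilon$ be as in the context, let $\lambda\in\mathbb{Q}_{>0}$ and let $\delta\in K$ with $|\delta|^2=\Delta$. Define $F:K^2\times K^2\to L^2$ by \[F\big((x,y)^T,(w,z)^T\big):=\big(\overline{z}+\overline{y}\sqrt{\varepsilon}\,j,\ -w+\overline{x}\sqrt{\varepsilon}\,j\big).\] Then $F$ restricts to a bijection between $\mathcal{B}_Q(\delta,\lambda)$ and $\mathcal{F}_{\alpha\lambda/\Delta}\!\left(\tfrac{\lambda}{\Delta}(\beta+\delta\sqrt{\varepsilon}\,j)\right)$.
   Context: $K$ is $\mathbb{Q}$ or an imaginary quadratic field, viewed inside $\mathbb{C}$, and $\mathbb{C}$ is identified with $\mathbb{R}+\mathbb{R}i$ inside the Hamilton quaternions $\mathbb{H}=\{a+bi+cj+dk\}$ (so $sj=j\overline{s}$ for $s\in K$). $M\in K^{2\times2}$ is positive definite hermitian, $Q(v)=v^*Mv$. A rational number is an absolute square in $K$ if it equals $|y|^2$ for some $y\in K$; write $\mu=\det M=\Delta\varepsilon$ with $\Delta\in\mathbb{Q}$ an absolute square in $K$ and $\varepsilon$ a positive integer whose only positive divisor that is an absolute square in $K$ is $1$. A pair $(a_1,a_2)\in K^2\times K^2$ is a $Q$-orthobalanced basis of norm $\lambda$ if $A^*MA=\lambda\,\mathrm{diag}(1,\varepsilon)$ for $A=(a_1|a_2)$; it is of type $\delta$ if $a_2=(Ma_1)_\perp/\delta$,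 where $(x,y)^T_\perp:=(-\overline{y},\overline{x})^T$. $\mathcal{B}_Q(\delta,\lambda)$ is the set of $Q$-orthobalanced bases of norm $\lambda$ and type $\delta$. $L:=\{r+s\sqrt{\varepsilon}\,j: r,s\in K\}\subseteq\mathbb{H}$, and for $t\in L$, $\nu\in\mathbb{Q}$: $\mathcal{F}_\nu(t):=\{(u,v)\in L^2: t=uv,\ |u|^2=\nu\}$, where $|\cdot|$ is the quaternion norm. *)

From mathcomp Require Import all_boot all_order all_algebra all_field.
Set Implicit Arguments. Unset Strict Implicit. Unset Printing Implicit Defensive.
Import Order.TTheory GRing.Theory Num.Theory.
Local Open Scope ring_scope.

(* Complex numbers are modelled by algC (algebraic complex numbers);
   all quantities in the statement are algebraic. *)

Definition Q_or_imag_quadratic (K : {pred algC}) : Prop :=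
  (forall x, (x \in K) = (x \in Crat)) \/
  (exists d : nat, (0 < d)%N /\
     forall x, x \in K <-> exists a b, a \in Crat /\ b \in Crat /\
                                       x = a + b * sqrtC (- d%:R)).

Definition i0 : 'I_2 := ord0.
Definition i1 : 'I_2 := ord_max.

Definition mxadj m n (A : 'M[algC]_(m, n)) : 'M[algC]_(n, m) := (map_mx (fun z : algC => z^*) A)^T.

Definition mx_over_K (K : {pred algC}) m n (A : 'M[algC]_(m, n)) : Prop :=
  forall i j, A i j \in K.

Definition mx_hermitian n (M : 'M[algC]_n) : Prop := mxadj M = M.

Definition mx_posdef n (M : 'M[algC]_n) : Prop :=
  forall v : 'cV[algC]_n, v != 0 -> 0 < (mxadj v *m M *m v) 0 0.

Definition abs_square_in (K : {pred algC}) (r : algC) : Prop :=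
  r \in Crat /\ exists y, y \in K /\ r = y * y^*.

Definition perp (v : 'cV[algC]_2) : 'cV[algC]_2 :=
  \col_(i < 2) (if i == i0 then - (v i1 0)^* else (v i0 0)^*).

Definition diag1e (eps : nat) : 'M[algC]_2 :=
  diag_mx (\row_(i < 2) (if i == i0 then 1 else eps%:R)).

Definition orthobalanced (M : 'M[algC]_2) (eps : nat) (lambda : algC)
  (a1 a2 : 'cV[algC]_2) : Prop :=
  let A : 'M[algC]_2 := row_mx a1 a2 in
  mxadj A *m M *m A = lambda *: diag1e eps.

Definition BQ (K : {pred algC}) (M : 'M[algC]_2) (eps : nat) (delta lambda : algC)
  (p : 'cV[algC]_2 * 'cV[algC]_2) : Prop :=
  mx_over_K K p.1 /\ mx_over_K K p.2 /\
  orthobalanced M eps lambda p.1 p.2 /\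
  p.2 = delta^-1 *: perp (M *m p.1).

(* Hamilton quaternions q = qa + qb j with qa, qb complex (C = R + R i),
   using j z = conj(z) j and j^2 = -1. *)
Record quat := Quat { qa : algC; qb : algC }.

Definition qmul (p q : quat) : quat :=
  Quat (qa p * qa q - qb p * (qb q)^*) (qa p * qb q + qb p * (qa q)^*).

Definition qnorm2 (q : quat) : algC := qa q * (qa q)^* + qb q * (qb q)^*.

Definition inL (K : {pred algC}) (eps : nat) (q : quat) : Prop :=
  exists r s, r \in K /\ s \in K /\ q = Quat r (s * sqrtC eps%:R).

Definition Fset (K : {pred algC}) (eps : nat) (nu : algC) (t : quat)
  (uv : quat * quat) : Prop :=
  inL K eps uv.1 /\ inL K eps uv.2 /\ t = qmul uv.1 uv.2 /\ qnorm2 uv.1 = nu.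

Definition Fmap (eps : nat) (p : 'cV[algC]_2 * 'cV[algC]_2) : quat * quat :=
  let x := p.1 i0 0 in let y := p.1 i1 0 in
  let w := p.2 i0 0 in let z := p.2 i1 0 in
  (Quat z^* (y^* * sqrtC eps%:R), Quat (- w) (x^* * sqrtC eps%:R)).

Definition bij_between (T U : Type) (A : T -> Prop) (B : U -> Prop) (f : T -> U) : Prop :=
  (forall x, A x -> B (f x)) /\
  (forall x y, A x -> A y -> f x = f y -> x = y) /\
  (forall u, B u -> exists x, A x /\ f x = u).

(* For a1 = (x, y) the vector a2 = (M a1)_perp / delta is M-orthogonal to a1 and has
   Q(a2) = det M Q(a1) / |delta|^2 = eps Q(a1); so a basis of type delta is orthobalanced of
   norm lambda iff Q(a1) = lambda.  Writing F(a1, a2) = (u, v), a direct computation gives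
   |u|^2 = alpha Q(a1) / Delta and u v = Q(a1) / Delta (beta + delta sqrt(eps) j), hence F maps
   B_Q(delta, lambda) into the target.  F is injective since sqrt(eps) <> 0.  Conversely every
   u is the first coordinate of F(a1, a2) for some a1 of type delta; the norm condition forces
   Q(a1) = lambda, and then v is determined by t = u v because u <> 0 is invertible in H. *)

From mathcomp Require Import all_boot all_order all_algebra all_field.
From mathcomp Require Import ring.
Set Implicit Arguments. Unset Strict Implicit. Unset Printing Implicit Defensive.
Import Order.TTheory GRing.Theory Num.Theory.
Local Open Scope ring_scope.

Lemma ord2P (i : 'I_2) : i = i0 \/ i = i1.
Proof. by case: i => [[|[|]]] // ?; [left|right]; apply: val_inj. Qed.

Lemma mulmx2E m n (A : 'M[algC]_(m, 2)) (B : 'M[algC]_(2, n)) i j :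
  (A *m B) i j = A i i0 * B i0 j + A i i1 * B i1 j.
Proof.
rewrite mxE big_ord_recl big_ord1.
by have -> : lift ord0 ord0 = i1 :> 'I_2 by apply: val_inj.
Qed.

Lemma mxadjE m n (A : 'M[algC]_(m, n)) i j : mxadj A i j = (A j i)^*.
Proof. by rewrite !mxE. Qed.

Lemma row_mx2_0 (a1 a2 : 'cV[algC]_2) i : (row_mx a1 a2 : 'M_2) i i0 = a1 i 0.
Proof. by rewrite mxE; case: splitP => k; rewrite (ord1 k) //= => /val_inj. Qed.

Lemma row_mx2_1 (a1 a2 : 'cV[algC]_2) i : (row_mx a1 a2 : 'M_2) i i1 = a2 i 0.
Proof. by rewrite mxE; case: splitP => k; rewrite (ord1 k) //= => /val_inj. Qed.

Lemma det_mx2 (M : 'M[algC]_2) : \det M = M i0 i0 * M i1 i1 - M i0 i1 * M i1 i0.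
Proof.
rewrite (expand_det_row _ i0) big_ord_recl big_ord1 /cofactor !det_mx11 !mxE /=.
have -> : lift i0 ord0 = i1 by apply: val_inj.
have -> : lift i1 ord0 = i0 by apply: val_inj.
by rewrite /= expr0 expr1 mul1r mulN1r mulrN.
Qed.

(* Stated at algC: rewriting with the generic rmorphism lemmas leaves conjugation in a form
   that [ring] and [field] do not identify with [_^*]. *)
Lemma conjCM (x y : algC) : (x * y)^* = x^* * y^*. Proof. exact: rmorphM. Qed.
Lemma conjCD (x y : algC) : (x + y)^* = x^* + y^*. Proof. exact: rmorphD. Qed.
Lemma conjCB (x y : algC) : (x - y)^* = x^* - y^*. Proof. exact: rmorphB. Qed.
Lemma conjCN (x : algC) : (- x)^* = - x^*. Proof. exact: rmorphN. Qed.
Lemma conjCV (x : algC) : (x^-1)^* = (x^*)^-1. Proof. exact: fmorphV. Qed.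

Definition conjCE := (conjCM, conjCD, conjCB, conjCN, conjCV, @conjCK algC).

Lemma sqrtC_nat_mul (n : nat) : sqrtC n%:R * sqrtC n%:R = n%:R :> algC.
Proof. by rewrite -expr2 sqrtCK. Qed.

Lemma conj_sqrtC_nat (n : nat) : (sqrtC n%:R)^* = sqrtC n%:R :> algC.
Proof. by rewrite geC0_conj // sqrtC_ge0 ler0n. Qed.

Lemma sqrtC_nat_neq0 (n : nat) : (0 < n)%N -> sqrtC n%:R != 0 :> algC.
Proof. by rewrite sqrtC_eq0 pnatr_eq0 -lt0n. Qed.

Lemma conj_sqrtC_opp_nat (d : nat) : (0 < d)%N -> (sqrtC (- d%:R))^* = - sqrtC (- d%:R) :> algC.
Proof.
move=> d_gt0; set r := sqrtC _.
have r2 : r ^+ 2 = - d%:R by rewrite sqrtCK.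
have : (r^*) ^+ 2 == r ^+ 2 by rewrite -rmorphXn r2 rmorphN /= conjC_nat.
rewrite eqf_sqr => /orP [/eqP r_real|/eqP //].
have : r \is Num.real by rewrite CrealE r_real.
by rewrite realEsqr r2 oppr_ge0 lern0 => /eqP d0; rewrite d0 in d_gt0.
Qed.

Definition hform (M : 'M[algC]_2) (a : 'cV[algC]_2) : algC := (mxadj a *m M *m a) 0 0.

Section HermitianMatrix.

Variable M : 'M[algC]_2.
Hypothesis M_herm : mx_hermitian M.

Lemma mx_hermitian_entry i j : M j i = (M i j)^*.
Proof. by rewrite -[in LHS]M_herm mxadjE. Qed.

Lemma mx_hermitian_diag_real i : (M i i)^* = M i i.
Proof. by rewrite -mx_hermitian_entry. Qed.

Hypothesis M_posdef : mx_posdef M.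

Lemma mx_posdef_gt0_00 : 0 < M i0 i0.
Proof.
pose e : 'cV[algC]_2 := \col_i (if i == i0 then 1 else 0).
have e_neq0 : e != 0 by apply/eqP => /matrixP /(_ i0 0); rewrite !mxE; apply/eqP/oner_neq0.
have := @M_posdef e e_neq0.
by rewrite !(mulmx2E, mxadjE, mxE) /= conjC1 conjC0 !(mulr0, mul0r, mulr1, mul1r, addr0, add0r).
Qed.

Lemma mx_posdef_det_gt0 : 0 < \det M.
Proof.
have alpha_gt0 := mx_posdef_gt0_00.
pose v : 'cV[algC]_2 := \col_i (if i == i0 then - M i0 i1 else M i0 i0).
have v_neq0 : v != 0.
  by apply/eqP => /matrixP /(_ i1 0); rewrite !mxE; apply/eqP; rewrite gt_eqF.
suff Qv : hform M v = M i0 i0 * \det M by rewrite -(pmulr_rgt0 _ alpha_gt0) -Qv M_posdef.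
rewrite /hform !(mulmx2E, mxadjE, mxE) /= !conjCE det_mx2 mx_hermitian_diag_real.
by rewrite [M i1 i0]mx_hermitian_entry; ring.
Qed.

End HermitianMatrix.

Definition qconj (q : quat) : quat := Quat (qa q)^* (- qb q).

Lemma qmul_qconj_mul (u w : quat) :
  qmul (qconj u) (qmul u w) = Quat (qnorm2 u * qa w) (qnorm2 u * qb w).
Proof. by case: u w => a b [c d]; rewrite /qmul /qnorm2 /= !conjCE; congr Quat; ring. Qed.

Lemma qmul_cancel (u v v' : quat) : qnorm2 u != 0 -> qmul u v = qmul u v' -> v = v'.
Proof.
move=> u_neq0 /(congr1 (qmul (qconj u))); rewrite !qmul_qconj_mul => -[].
by case: v v' => [c d] [c' d'] /= /(mulfI u_neq0) -> /(mulfI u_neq0) ->.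
Qed.

Section QOrImagQuadratic.

Variable K : {pred algC}.
Hypothesis K_QIQ : Q_or_imag_quadratic K.

Lemma Q_or_imag_quadratic_conj x : x \in K -> x^* \in K.
Proof.
case: K_QIQ => [KE|[d [d_gt0 KE]]].
  by rewrite !KE => x_rat; rewrite conj_Creal ?Creal_Crat.
move/KE=> [a [b [a_rat [b_rat ->]]]]; apply/KE.
exists a, (- b); rewrite rpredN; do 2!split => //.
by rewrite !conjCE conj_sqrtC_opp_nat // !conj_Creal ?Creal_Crat // mulrN mulNr.
Qed.

Lemma Q_or_imag_quadratic_opp x : x \in K -> - x \in K.
Proof.
case: K_QIQ => [KE|[d [d_gt0 KE]]].
  by rewrite !KE rpredN.
move/KE=> [a [b [a_rat [b_rat ->]]]]; apply/KE.
by exists (- a), (- b); rewrite !rpredN opprD mulNr.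
Qed.

End QOrImagQuadratic.

Section Fmap.

Variable eps : nat.
Hypothesis eps_gt0 : (0 < eps)%N.

Let sqrt_eps_neq0 : sqrtC eps%:R != 0 :> algC := sqrtC_nat_neq0 eps_gt0.

Lemma Fmap_inj : injective (Fmap eps).
Proof.
move=> [a1 a2] [b1 b2] [/(can_inj conjCK) e1 /(mulIf sqrt_eps_neq0)/(can_inj conjCK) e2].
move=> /oppr_inj e3 /(mulIf sqrt_eps_neq0)/(can_inj conjCK) e4.
by congr pair; apply/matrixP => i j; rewrite (ord1 j); case: (ord2P i) => ->.
Qed.

Lemma Fmap_onto_inL K (u v : quat) :
  Q_or_imag_quadratic K -> inL K eps u -> inL K eps v ->
  exists p, [/\ mx_over_K K p.1, mx_over_K K p.2 & Fmap eps p = (u, v)].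
Proof.
move=> K_QIQ [r [s [rK [sK ->]]]] [r' [s' [r'K [s'K ->]]]].
exists (\col_i (if i == i0 then s'^* else s^*), \col_i (if i == i0 then - r' else r^*)).
split=> [i j|i j|]; rewrite ?(ord1 j); last by rewrite /Fmap !mxE /= !conjCK opprK.
  by rewrite mxE; case: (ord2P i) => -> /=; apply: Q_or_imag_quadratic_conj.
rewrite mxE; case: (ord2P i) => -> /=.
  exact: Q_or_imag_quadratic_opp.
exact: Q_or_imag_quadratic_conj.
Qed.

End Fmap.

Definition type_mate (M : 'M[algC]_2) (delta : algC) (a : 'cV[algC]_2) : 'cV[algC]_2 :=
  delta^-1 *: perp (M *m a).

Section TypeMate.

Variables (M : 'M[algC]_2) (delta : algC) (eps : nat).
Hypotheses (M_herm : mx_hermitian M) (alpha_neq0 : M i0 i0 != 0) (delta_neq0 : delta != 0).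
Hypothesis detM : \det M = delta * delta^* * eps%:R.

Local Notation alpha := (M i0 i0).
Local Notation beta := (M i0 i1).
Local Notation sqrt_eps := (sqrtC eps%:R : algC).

Let hermE := (mx_hermitian_diag_real M_herm, mx_hermitian_entry M_herm i0 i1).

(* [field] cannot use the relation on det M, so gamma is eliminated in its favour. *)
Let gammaE : M i1 i1 = (delta * delta^* * eps%:R + beta * beta^*) / alpha.
Proof.
by rewrite -detM det_mx2 [M i1 i0]mx_hermitian_entry //; field.
Qed.

Let delta_conj_neq0 : delta^* != 0. Proof. by rewrite conjC_eq0. Qed.

Lemma orthobalanced_type_mate lambda a :
  orthobalanced M eps lambda a (type_mate M delta a) <-> hform M a = lambda.
Proof.
rewrite /orthobalanced /hform; split.
  move/matrixP/(_ i0 i0); rewrite !(mulmx2E, mxadjE, row_mx2_0, row_mx2_1, mxE) /=.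
  by rewrite mulr1 => ->.
move=> <-; apply/matrixP=> i j.
case: (ord2P i) (ord2P j) => -> [] ->;
  rewrite !(mulmx2E, mxadjE, row_mx2_0, row_mx2_1, mxE) /= ?conjCE ?hermE ?conjCK ?gammaE;
  by field; rewrite ?alpha_neq0 ?delta_neq0 ?delta_conj_neq0.
Qed.

Lemma Fmap_type_mate (a : 'cV[algC]_2) :
  let x := a i0 0 in let y := a i1 0 in
  Fmap eps (a, type_mate M delta a) =
    (Quat ((alpha * x + beta * y) / delta^*) (y^* * sqrt_eps),
     Quat ((beta * x^* + M i1 i1 * y^*) / delta) (x^* * sqrt_eps)).
Proof.
rewrite /Fmap !(mulmx2E, mxE) /= !conjCE !hermE conjCK mulrN opprK.
by congr (Quat _ _, Quat _ _); apply: mulrC.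
Qed.

Lemma qnorm2_Fmap_type_mate a :
  qnorm2 (Fmap eps (a, type_mate M delta a)).1 = alpha * hform M a / (delta * delta^*).
Proof.
rewrite Fmap_type_mate /qnorm2 /hform !(mulmx2E, mxadjE, mxE) /= !conjCE !hermE.
rewrite conj_sqrtC_nat [X in _ + X = _]mulrACA sqrtC_nat_mul gammaE.
by field; rewrite ?alpha_neq0 ?delta_neq0 ?delta_conj_neq0.
Qed.

Lemma qmul_Fmap_type_mate a :
  let uv := Fmap eps (a, type_mate M delta a) in
  let c := hform M a / (delta * delta^*) in
  qmul uv.1 uv.2 = Quat (c * beta) (c * (delta * sqrt_eps)).
Proof.
rewrite Fmap_type_mate /qmul /hform !(mulmx2E, mxadjE, mxE) /= !conjCE !hermE.
rewrite conj_sqrtC_nat gammaE -[X in delta * delta^* * X]sqrtC_nat_mul.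
by congr Quat; field; rewrite ?alpha_neq0 ?delta_neq0 ?delta_conj_neq0.
Qed.

Hypothesis eps_gt0 : (0 < eps)%N.

Let sqrt_eps_neq0 : sqrt_eps != 0 := sqrtC_nat_neq0 eps_gt0.

Lemma Fmap_type_mate_fst_onto u : exists a, (Fmap eps (a, type_mate M delta a)).1 = u.
Proof.
case: u => r s; pose y := s^* / sqrt_eps.
exists (\col_i (if i == i0 then (delta^* * r - beta * y) / alpha else y)).
rewrite Fmap_type_mate !mxE /= !conjCE conj_sqrtC_nat divfK //.
by congr Quat; field; rewrite ?alpha_neq0 ?delta_conj_neq0.
Qed.

Lemma bij_between_BQ_Fset K lambda :
  Q_or_imag_quadratic K -> lambda != 0 ->
  let Delta := delta * delta^* in
  bij_between (BQ K M eps delta lambda)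
    (Fset K eps (alpha * lambda / Delta)
       (Quat (lambda / Delta * beta) (lambda / Delta * (delta * sqrt_eps))))
    (Fmap eps).
Proof.
move=> K_QIQ lambda_neq0 Delta; split; [|split].
- move=> [a1 a2] [a1K [a2K [/= ob a2E]]] /=.
  have Qa : hform M a1 = lambda by apply/orthobalanced_type_mate; rewrite /type_mate -a2E.
  split; [|split; [|split]].
  + by exists (a2 i1 0)^*, (a1 i1 0)^*; rewrite !Q_or_imag_quadratic_conj.
  + exists (- a2 i0 0), (a1 i0 0)^*.
    by rewrite Q_or_imag_quadratic_opp ?Q_or_imag_quadratic_conj.
  + by rewrite a2E qmul_Fmap_type_mate Qa !mulrA.
  + by rewrite a2E qnorm2_Fmap_type_mate Qa.
- by move=> p q _ _; apply: Fmap_inj.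
move=> [u v] [uL [vL [/= t_uv nu]]].
have [p [p1K p2K Fp]] := Fmap_onto_inL K_QIQ uL vL.
have [a Fa1] := Fmap_type_mate_fst_onto u.
have Qa : hform M a = lambda.
  move: nu; rewrite -Fa1 qnorm2_Fmap_type_mate.
  by move/(mulIf (invr_neq0 _))/(mulfI alpha_neq0); apply; rewrite mulf_neq0.
have Fa2 : (Fmap eps (a, type_mate M delta a)).2 = v.
  apply: (@qmul_cancel u); last by rewrite -t_uv -{1}Fa1 qmul_Fmap_type_mate Qa !mulrA.
  by rewrite nu /Delta !mulf_neq0 ?invr_neq0 ?mulf_neq0.
have pE : p = (a, type_mate M delta a).
  by apply: (Fmap_inj eps_gt0); rewrite Fp -Fa1 -Fa2; case: Fmap.
exists p; do 3!split => //; rewrite pE /=; split => //.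
exact/orthobalanced_type_mate.
Qed.

End TypeMate.

Theorem mainTheorem10 (K : {pred algC}) (M : 'M[algC]_2) (Delta : algC) (eps : nat)
  (lambda delta : algC) :
  Q_or_imag_quadratic K ->
  mx_over_K K M -> mx_hermitian M -> mx_posdef M ->
  \det M = Delta * eps%:R ->
  abs_square_in K Delta ->
  (0 < eps)%N ->
  (forall d : nat, (0 < d)%N -> (d %| eps)%N -> abs_square_in K d%:R -> d = 1%N) ->
  lambda \in Crat -> 0 < lambda ->
  delta \in K -> delta * (delta^*)%C = Delta ->
  let alpha := M i0 i0 in
  let beta := M i0 i1 in
  bij_between (BQ K M eps delta lambda)
    (Fset K eps (alpha * lambda / Delta)
       (Quat (lambda / Delta * beta) (lambda / Delta * (delta * sqrtC eps%:R))))
    (Fmap eps).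
Proof.
move=> K_QIQ _ M_herm M_posdef detM _ eps_gt0 _ _ lambda_gt0 _ DeltaE alpha beta.
subst Delta.
have delta_neq0 : delta != 0.
  have := mx_posdef_det_gt0 M_herm M_posdef.
  by rewrite detM; apply: contraTneq => ->; rewrite !mul0r ltxx.
have alpha_neq0 : alpha != 0 := lt0r_neq0 (mx_posdef_gt0_00 M_posdef).
exact (bij_between_BQ_Fset M_herm alpha_neq0 delta_neq0 detM eps_gt0 K_QIQ (lt0r_neq0 lambda_gt0)).
Qed.
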